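(* The variety $\mathbf{M}_1$ of regular pseudocomplemented de Morgan algebras of range $1$ is locally finite.
   Context: A pseudocomplemented de Morgan algebra is $(L;\wedge,\vee,{}^\ast,{}^\prime,0,1)$ with $(L;\wedge,\vee,0,1)$ a bounded distributive lattice, ${}^\ast$ the pseudocomplement and ${}^\prime$ a de Morgan involution. $\mathbf{M}_1$ is the variety of such algebras satisfying $x\wedge x^{\prime\ast\prime}\le y\vee y^\ast$ (regularity) and $(x\wedge x^{\prime\ast})^{\prime\ast}=(x\wedge x^{\prime\ast})^{\prime\ast\prime\ast}$ (range $1$). *)

From HB Require Import structures.
From mathcomp Require Import all_boot all_order.
Set Implicit Arguments. Unset Strict Implicit. Unset Printing Implicit Defensive.
Import Order.Theory.
Local Open Scope order_scope.

Definition is_pseudocomplement {d} {T : tbDistrLatticeType d} (star : T -> T) :=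
  forall x y : T, x `&` y = \bot <-> y <= star x.

Definition is_deMorgan_involution {d} {T : tbDistrLatticeType d} (prime : T -> T) :=
  (forall x : T, prime (prime x) = x) /\
  (forall x y : T, prime (x `|` y) = prime x `&` prime y).

Definition pcdm {d} {T : tbDistrLatticeType d} (star prime : T -> T) :=
  is_pseudocomplement star /\ is_deMorgan_involution prime.

Definition in_M1 {d} {T : tbDistrLatticeType d} (star prime : T -> T) :=
  pcdm star prime /\
  (forall x y : T, x `&` prime (star (prime x)) <= y `|` star y) /\
  (forall x : T,
     star (prime (x `&` star (prime x))) =
     star (prime (star (prime (x `&` star (prime x)))))).

Inductive generated {d} {T : tbDistrLatticeType d} (star prime : T -> T)
    (s : seq T) : T -> Prop :=
  | gen_base x : x \in s -> generated star prime s x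
  | gen_bot : generated star prime s \bot
  | gen_top : generated star prime s \top
  | gen_meet x y : generated star prime s x -> generated star prime s y ->
      generated star prime s (x `&` y)
  | gen_join x y : generated star prime s x -> generated star prime s y ->
      generated star prime s (x `|` y)
  | gen_star x : generated star prime s x -> generated star prime s (star x)
  | gen_prime x : generated star prime s x -> generated star prime s (prime x).

Definition locally_finite_M1 : Prop :=
  forall d (T : tbDistrLatticeType d) (star prime : T -> T),
    in_M1 star prime ->
    forall s : seq T, exists l : seq T,
      forall x, generated star prime s x -> x \in l.

From HB Require Import structures.
From mathcomp Require Import all_boot all_order.
From Stdlib Require Import Classical.
Set Implicit Arguments. Unset Strict Implicit. Unset Printing Implicit Defensive.
Import Order.Theory.
Local Open Scope order_scope.

(* In a regular algebra an element x is determined by its images x* and x'*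
   under [star] and [negstar]: this is the regularity identity combined with
   x \/ x'*' = 1.  Both images are skeletal, i.e. live in the Boolean algebra of
   elements with x** = x.  Given finitely many generators, we build a finite
   family of pairwise disjoint, dense skeletal atoms and show that the finite
   Boolean algebra they span is closed under [star] and [negstar]; range 1
   enters through the fact that, for w of the form x'*, w /\ w'* is fixed by
   [negstar] together with its pseudocomplement.  So x* and x'* range over a
   finite set for all x in the generated subalgebra, which is therefore
   finite. *)

Lemma finite_of_inj_into_seq (U V : eqType) (P : U -> Prop) (phi : U -> V)
    (L : seq V) :
  (forall x y, P x -> P y -> phi x = phi y -> x = y) ->
  (forall x, P x -> phi x \in L) -> exists l : seq U, forall x, P x -> x \in l.
Proof.
elim: L P => [|v L IH] P phi_inj phiL.
  by exists [::] => x Px; have := phiL x Px.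
have [[x0 [Px0 phix0]]|no_v] := classic (exists x, P x /\ phi x = v); last first.
  apply: IH => // x Px; have := phiL x Px; rewrite inE.
  by case: eqP => // phix _; case: no_v; exists x.
have phiL' x : P x /\ phi x != v -> phi x \in L.
  by case=> Px phixv; have := phiL x Px; rewrite inE (negbTE phixv).
have [l Hl] := IH _ (fun x y Px Py => phi_inj x y (proj1 Px) (proj1 Py)) phiL'.
exists (x0 :: l) => x Px; rewrite inE.
have [phix|phixv] := eqVneq (phi x) v; last by rewrite Hl ?orbT.
by rewrite (phi_inj x x0) ?eqxx ?phix ?phix0.
Qed.

Ltac solve_meet_le := first
 [ done
 | assumption
 | match goal with
   |- is_true (_ <= _ `&` _) => rewrite lexI; apply/andP; split; solve_meet_le
   end
 | apply: leIxl; solve_meet_le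
 | apply: leIxr; solve_meet_le ].

Section DeMorgan.
Variables (d : Order.disp_t) (T : tbDistrLatticeType d) (neg : T -> T).
Hypotheses (negK : involutive neg)
  (negU : forall x y : T, neg (x `|` y) = neg x `&` neg y).

Lemma neg_anti x y : x <= y -> neg y <= neg x.
Proof. by move=> /join_idPl; rewrite joinC => <-; rewrite negU leIl. Qed.

Lemma neg_le x y : (neg x <= neg y) = (y <= x).
Proof. by apply/idP/idP => [/neg_anti|/neg_anti//]; rewrite !negK. Qed.

Lemma negI x y : neg (x `&` y) = neg x `|` neg y.
Proof. by rewrite -[neg x `|` _]negK negU !negK. Qed.

Lemma neg0 : neg \bot = \top.
Proof. by apply/le_anti; rewrite lex1 -[\top]negK neg_anti // le0x. Qed.

Lemma neg1 : neg \top = \bot.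
Proof. by rewrite -neg0 negK. Qed.

End DeMorgan.

Section Pseudocomplement.
Variables (d : Order.disp_t) (T : tbDistrLatticeType d) (star : T -> T).
Hypothesis starP : forall x y : T, x `&` y = \bot <-> y <= star x.

Lemma meet_star x : x `&` star x = \bot.
Proof. exact/starP. Qed.

Lemma le_star x y : x `&` y = \bot -> y <= star x.
Proof. by move/starP. Qed.

Lemma le_star_meet x y : y <= star x -> x `&` y = \bot.
Proof. by move/starP. Qed.

Lemma le_star2 x : x <= star (star x).
Proof. by apply: le_star; rewrite meetC meet_star. Qed.

Lemma star_anti x y : x <= y -> star y <= star x.
Proof.
by move=> xy; apply/le_star/eqP; rewrite -lex0 -(meet_star y) leI2.
Qed.

Lemma star3 x : star (star (star x)) = star x.
Proof. by apply/le_anti; rewrite le_star2 star_anti // le_star2. Qed.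

Lemma star0 : star \bot = \top.
Proof. by apply/le_anti; rewrite lex1 le_star // meet0x. Qed.

Lemma star1 : star \top = \bot.
Proof. by rewrite -(meet_star \top) meet1x. Qed.

Lemma starU x y : star (x `|` y) = star x `&` star y.
Proof.
apply/le_anti; rewrite lexI !star_anti ?leUl ?leUr //=.
apply/le_star/eqP; rewrite -lex0 meetUl leUx.
by rewrite meetA meet_star meet0x meetCA meet_star meetx0 lexx.
Qed.

Definition skeletal x := star (star x) = x.

Definition sjoin x y := star (star x `&` star y).

Lemma starI x y : star (x `&` y) = sjoin (star x) (star y).
Proof.
apply/le_anti/andP; split; last by apply/star_anti/leI2; apply: le_star2.
apply: le_star; set a := star (x `&` y).
have axy : a `&` (x `&` y) = \bot by rewrite meetC meet_star.
have ax : a `&` x <= star y by apply: le_star; rewrite meetC -meetA axy.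
have ay : a `&` star (star y) <= star x.
  apply/le_star/eqP; rewrite -lex0 meetCA meetA -(meet_star (star y)).
  by rewrite leI2 // meetC.
apply/eqP; rewrite -lex0 meetC meetCA meetC -(meet_star (star x)) leI2 //.
Qed.

Lemma star2I x y : star (star (x `&` y)) = star (star x) `&` star (star y).
Proof.
apply/le_anti; rewrite lexI !star_anti ?star_anti ?leIl ?leIr //=.
by rewrite starI le_star2.
Qed.

Lemma skeletal_star x : skeletal (star x).
Proof. exact: star3. Qed.

Lemma skeletal_meet x y : skeletal x -> skeletal y -> skeletal (x `&` y).
Proof. by rewrite /skeletal star2I => -> ->. Qed.

Lemma skeletal_top : skeletal \top.
Proof. by rewrite /skeletal star1 star0. Qed.

Lemma skeletal_split a y : skeletal a -> a = sjoin (star y `&` a) (y `&` a).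
Proof.
move=> ska; apply/le_anti/andP; split; last first.
  rewrite -[X in _ <= X]ska; apply: star_anti.
  by rewrite lexI; apply/andP; split; apply: star_anti; apply: leIr.
apply/le_star/eqP; rewrite -lex0.
have h : (star (star y `&` a) `&` star (y `&` a)) `&` a <= star y.
  by apply/le_star/eqP; rewrite -lex0 -(meet_star (y `&` a)); solve_meet_le.
by rewrite -(meet_star (star y `&` a)); solve_meet_le.
Qed.

Definition literal (b : bool) x := if b then x else star x.

Lemma skeletal_literal b x : skeletal x -> skeletal (literal b x).
Proof. by case: b => //= _; apply: skeletal_star. Qed.

Section Families.
Variables (A : finType) (atom : A -> T).

Definition disjoint_family := forall a b, a != b -> atom a `&` atom b = \bot.
Definition dense_family := forall x, (forall a, x `&` atom a = \bot) -> x = \bot.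

(* The join of the atoms in [B], computed in the Boolean algebra of skeletal
   elements. *)
Definition span (B : {ffun A -> bool}) := \meet_(a | ~~ B a) star (atom a).
Definition spanned x := exists B, x = span B.
Definition spans := [seq span B | B <- enum {ffun A -> bool}].

Lemma spanned_in_spans x : spanned x -> x \in spans.
Proof. by case=> B ->; apply/map_f; rewrite mem_enum. Qed.

Lemma span_meet B B' : span B `&` span B' = span [ffun a => B a && B' a].
Proof.
apply/le_anti/andP; split.
  apply/meetsP => a; rewrite ffunE negb_and => /orP[nBa|nB'a].
    by apply/leIxl/meets_inf.
  by apply/leIxr/meets_inf.
rewrite lexI; apply/andP; split; apply/meetsP => a nBa; apply: meets_inf.
  by rewrite ffunE negb_and nBa.
by rewrite ffunE negb_and nBa orbT.
Qed.

Lemma spanned_top : spanned \top.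
Proof.
exists [ffun => true]; apply/le_anti; rewrite lex1 andbT.
by apply/meetsP => a; rewrite ffunE.
Qed.

Lemma spanned_meet x y : spanned x -> spanned y -> spanned (x `&` y).
Proof. by case=> B -> [B' ->]; exists [ffun a => B a && B' a]; rewrite span_meet. Qed.

Lemma spanned_bigmeet (I : finType) (P : pred I) (F : I -> T) :
  (forall i, spanned (F i)) -> spanned (\meet_(i | P i) F i).
Proof.
move=> spF; apply: (big_ind spanned) => //; [exact: spanned_top | exact: spanned_meet].
Qed.

Hypotheses (atom_disj : disjoint_family) (atom_dense : dense_family).

Lemma star_span B : star (span B) = span [ffun a => ~~ B a].
Proof.
apply/le_anti/andP; split.
  apply/meetsP => a; rewrite ffunE negbK => Ba; apply: star_anti.
  apply/meetsP => b nSb; apply/le_star/atom_disj.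
  by apply: contraNneq nSb => ->.
apply/le_star/atom_dense => a; apply/eqP; rewrite -lex0 -(meet_star (atom a)).
case Ba: (B a).
  have h : span [ffun a => ~~ B a] <= star (atom a).
    by apply: meets_inf; rewrite ffunE Ba.
  by solve_meet_le.
have h : span B <= star (atom a) by apply: meets_inf; rewrite Ba.
by solve_meet_le.
Qed.

Lemma spanned_star x : spanned x -> spanned (star x).
Proof. by case=> B ->; exists [ffun a => ~~ B a]; rewrite star_span. Qed.

Lemma spanned_bot : spanned \bot.
Proof. by rewrite -star1; apply/spanned_star/spanned_top. Qed.

Lemma spanned_refining g : skeletal g ->
  (forall a, exists b, atom a <= literal b g) -> spanned g.
Proof.
move=> skg refines; exists [ffun a => atom a <= g]; apply/le_anti/andP; split.
  apply/meetsP => a; rewrite ffunE => ag.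
  have [[] a_g] := refines a; first by rewrite a_g in ag.
  by apply: le_star; rewrite meetC; apply: le_star_meet.
rewrite -[X in _ <= X]skg; apply/le_star/atom_dense => a; apply/eqP; rewrite -lex0.
have [ag|nag] := boolP (atom a <= g); first by rewrite -(meet_star g); solve_meet_le.
have h : span [ffun a => atom a <= g] <= star (atom a).
  by apply: meets_inf; rewrite ffunE.
by rewrite -(meet_star (atom a)); solve_meet_le.
Qed.

End Families.

Definition meet_family (A1 A2 : finType) (atom1 : A1 -> T) (atom2 : A2 -> T)
  (p : A1 * A2) := atom1 p.1 `&` atom2 p.2.

Lemma disjoint_meet_family (A1 A2 : finType) (atom1 : A1 -> T) (atom2 : A2 -> T) :
  disjoint_family atom1 -> disjoint_family atom2 ->
  disjoint_family (meet_family atom1 atom2).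
Proof.
move=> dj1 dj2 [a1 a2] [b1 b2] ne; apply/eqP; rewrite -lex0 /meet_family /=.
have [e1|n1] := eqVneq a1 b1; last by rewrite -(dj1 _ _ n1); solve_meet_le.
have n2 : a2 != b2 by apply: contraNneq ne => ->; rewrite e1.
by rewrite -(dj2 _ _ n2); solve_meet_le.
Qed.

Lemma dense_meet_family (A1 A2 : finType) (atom1 : A1 -> T) (atom2 : A2 -> T) :
  dense_family atom1 -> dense_family atom2 -> dense_family (meet_family atom1 atom2).
Proof.
move=> dn1 dn2 x x_disj; apply: dn1 => a1; apply: dn2 => a2.
by rewrite -meetA; apply: (x_disj (a1, a2)).
Qed.

Section Minterms.
Variables (I : finType) (gen : I -> T).

Definition minterm (B : {ffun I -> bool}) :=
  \meet_(i <- enum I) literal (B i) (gen i).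

Lemma minterm_le B i : minterm B <= literal (B i) (gen i).
Proof. by apply: meets_inf_seq; rewrite ?mem_enum. Qed.

Lemma minterm_ind (P : T -> Prop) :
  P \top -> (forall x y, P x -> P y -> P (x `&` y)) ->
  (forall b i, P (literal b (gen i))) -> forall B, P (minterm B).
Proof. by move=> Ptop Pmeet Plit B; apply: (big_ind P) => // i _; apply: Plit. Qed.

Lemma skeletal_minterm B : (forall i, skeletal (gen i)) -> skeletal (minterm B).
Proof.
move=> skgen; apply: minterm_ind B; first exact: skeletal_top.
  exact: skeletal_meet.
by move=> b i; apply/skeletal_literal.
Qed.

Lemma disjoint_minterm : disjoint_family minterm.
Proof.
move=> B B' neB; have [/existsP[i neBi]|] := boolP [exists i, B i != B' i].
  apply/eqP; rewrite -lex0.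
  have <- : literal (B i) (gen i) `&` literal (B' i) (gen i) = \bot.
    by move: neBi; case: (B i); case: (B' i); rewrite //= ?meet_star // meetC meet_star.
  by apply: leI2; apply: minterm_le.
rewrite negb_exists => /forallP eqB; case/eqP: neB.
by apply/ffunP => i; apply/eqP/negbNE/eqB.
Qed.

Lemma dense_minterm_seq (r : seq I) x : uniq r ->
  (forall B : {ffun I -> bool},
     x `&` \meet_(i <- r) literal (B i) (gen i) = \bot) -> x = \bot.
Proof.
elim: r x => [|i r IH] x /=.
  by move=> _ /(_ [ffun => true]); rewrite big_nil meetx1.
case/andP => i_r r_uniq x_disj.
have x_lit b : x `&` literal b (gen i) = \bot.
  apply: IH => // B; have := x_disj [ffun j => if j == i then b else B j].
  rewrite big_cons ffunE eqxx meetA => <-; congr (_ `&` _).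
  apply: eq_big_seq => j j_r; rewrite ffunE; case: eqP => // ji.
  by rewrite -ji j_r in i_r.
have x_sg : x <= star (gen i) by apply: le_star; rewrite meetC (x_lit true).
have x_ssg : x <= star (star (gen i)).
  by apply: le_star; rewrite meetC (x_lit false).
by apply/eqP; rewrite -lex0 -(meet_star (star (gen i))) lexI x_sg x_ssg.
Qed.

Lemma dense_minterm : dense_family minterm.
Proof. by move=> x x_disj; apply: (dense_minterm_seq (enum_uniq I)). Qed.

Lemma spanned_minterm (A : finType) (atom : A -> T) B :
  disjoint_family atom -> dense_family atom ->
  (forall i, spanned atom (gen i)) -> spanned atom (minterm B).
Proof.
move=> dj dn spgen; apply: minterm_ind B; first exact: spanned_top.
  exact: spanned_meet.
by move=> [] i /=; last apply: (spanned_star dj dn); apply: spgen.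
Qed.

End Minterms.

Section PcdmAlgebra.
Variable neg : T -> T.
Hypotheses (negK : involutive neg)
  (negU : forall x y : T, neg (x `|` y) = neg x `&` neg y).

Definition negstar x := star (neg x).

Lemma negstarI x y : negstar (x `&` y) = negstar x `&` negstar y.
Proof. by rewrite /negstar negI // starU. Qed.

Lemma negstarU x y : negstar (x `|` y) = sjoin (negstar x) (negstar y).
Proof. by rewrite /negstar negU starI. Qed.

Lemma negstar_mono x y : x <= y -> negstar x <= negstar y.
Proof. by move=> xy; rewrite /negstar star_anti // neg_anti. Qed.

Lemma negstar1 : negstar \top = \top.
Proof. by rewrite /negstar neg1 // star0. Qed.

Lemma negstar0 : negstar \bot = \bot.
Proof. by rewrite /negstar neg0 // star1. Qed.

Lemma negstar_neg x : negstar (neg x) = star x.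
Proof. by rewrite /negstar negK. Qed.

Lemma skeletal_negstar x : skeletal (negstar x).
Proof. exact: skeletal_star. Qed.

Lemma negstar_star_sym x y : x <= negstar (star y) -> y <= negstar (star x).
Proof.
move=> /le_star_meet; rewrite meetC => /le_star y_sx.
have nsx_sy : neg (star x) <= star y by rewrite -(neg_le negK negU) negK.
by apply: le_star; rewrite meetC; apply: le_star_meet.
Qed.

Hypothesis regular : forall x y : T, x `&` neg (star (neg x)) <= y `|` star y.

Lemma join_neg_negstar y : y `|` neg (negstar y) = \top.
Proof. by rewrite -[LHS]negK negU negK meet_star neg0. Qed.

Lemma le_of_star_negstar x y : star x = star y -> negstar x = negstar y -> x <= y.
Proof.
move=> sxy nsxy; have x_y : x `&` neg (negstar x) <= y.
  have := regular x y; rewrite -sxy => reg.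
  have : x `&` neg (negstar x) <= x `&` (y `|` star x) by rewrite lexI leIl reg.
  by rewrite meetUr meet_star joinx0 => /le_trans; apply; apply: leIr.
by rewrite -[x]meetx1 -(join_neg_negstar y) meetUr leUx leIr -nsxy.
Qed.

Lemma star_negstar_inj x y : star x = star y -> negstar x = negstar y -> x = y.
Proof. by move=> sxy nsxy; apply/le_anti; rewrite !le_of_star_negstar. Qed.

Definition bifixed z := negstar z = z /\ negstar (star z) = star z.

Lemma skeletal_bifixed z : bifixed z -> skeletal z.
Proof. by case=> nsz _; rewrite -nsz; apply: skeletal_negstar. Qed.

Lemma bifixed_star z : bifixed z -> bifixed (star z).
Proof.
by move=> bz; have skz := skeletal_bifixed bz; case: bz => nsz nssz; split; rewrite ?skz.
Qed.

Lemma bifixed_top : bifixed \top.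
Proof. by split; rewrite ?negstar1 // star1 negstar0. Qed.

Lemma negstar_sjoin x z :
  skeletal x -> bifixed z -> negstar (sjoin x z) = sjoin (negstar x) z.
Proof.
move=> skx [nsz nssz]; set j := sjoin x z.
have x_j : x <= j.
  by apply/le_star/eqP; rewrite -lex0 meetAC (meetC (star x)) meet_star meet0x.
have z_j : z <= j.
  by apply/le_star/eqP; rewrite -lex0 -meetA (meetC (star z)) meet_star meetx0.
apply/le_anti/andP; split.
  have j_x : negstar j `&` star z <= negstar x.
    rewrite -nssz -negstarI; apply: negstar_mono.
    by rewrite -[X in _ <= X]skx; apply: le_star; rewrite meetCA meetC meet_star.
  apply/le_star/eqP; rewrite -lex0 -(meet_star (negstar x)) meetC lexI.
  by rewrite meetCA leIl andbT (le_trans _ j_x) // leIr.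
rewrite -(skeletal_negstar j); apply: star_anti.
rewrite lexI; apply/andP; split; apply: star_anti; first exact: negstar_mono.
by rewrite -nsz; apply: negstar_mono.
Qed.

Lemma bifixed_meet z1 z2 : bifixed z1 -> bifixed z2 -> bifixed (z1 `&` z2).
Proof.
move=> bz1 bz2; have skz1 := skeletal_bifixed bz1.
have := negstar_sjoin (skeletal_star z1) (bifixed_star bz2).
case: bz1 bz2 => [nsz1 nssz1] [nsz2 nssz2]; rewrite /sjoin skz1 skeletal_bifixed //.
by rewrite nssz1 skz1 => nssz12; split; rewrite ?negstarI ?nsz1 ?nsz2 // starI.
Qed.

Definition core w := w `&` negstar w.
Definition kpart a := a `&` negstar (star a).

Lemma negstar_star_split b : negstar (star b) = sjoin (core (star b)) (kpart b).
Proof. exact/skeletal_split/skeletal_negstar. Qed.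

Lemma kpart_id a b : b <= kpart a -> b <= a -> kpart b = b.
Proof.
move=> b_ka b_a; apply/meet_idPl; apply: le_trans b_ka _.
by apply: le_trans (leIr _ _) _; apply/negstar_mono/star_anti.
Qed.

Lemma kpart0 : kpart \bot = \bot.
Proof. exact: meet0x. Qed.

Lemma kpart_residual a : kpart (a `&` star (kpart a)) = \bot.
Proof.
set e := a `&` star (kpart a).
have a_ka : a <= negstar (star (kpart a)) by apply: negstar_star_sym; apply: leIr.
have ke_e : kpart e <= e by apply: leIl.
have ke_a : kpart e <= a by apply: le_trans ke_e _; apply: leIl.
have ke_ska : kpart e <= star (kpart a) by apply: le_trans ke_e _; apply: leIr.
have ke_nsa : kpart e <= negstar (star a).
  have sa : star (kpart a `|` e) <= star a.
    by apply: le_star; rewrite starU meetA meet_star.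
  apply: le_trans (negstar_mono sa); rewrite starU negstarI lexI leIr andbT.
  exact: le_trans ke_a a_ka.
apply/eqP; rewrite -lex0 -(meet_star (kpart a)) lexI ke_ska andbT.
by rewrite {2}/kpart lexI ke_a ke_nsa.
Qed.

Lemma kpart_atom_meet_minterm (A : finType) (atom : A -> T) a (C : {ffun A -> bool}) :
  disjoint_family atom ->
  let x := atom a `&` minterm (fun b => kpart (atom b)) C in
  kpart x = x \/ kpart x = \bot.
Proof.
move=> dj; set kap := minterm _ C => /=.
have kap_le b : kap <= literal (C b) (kpart (atom b)) by apply: minterm_le.
case Ca: (C a).
  left; apply: (@kpart_id (atom a)); last exact: leIl.
  by apply: le_trans (leIr _ _) _; have := kap_le a; rewrite Ca.
right; have [/existsP[b /andP[ba Cb]]|] := boolP [exists b, (b != a) && C b].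
  have -> : atom a `&` kap = \bot.
    apply/eqP; rewrite -lex0 -(dj _ _ ba) meetC leI2 //.
    by apply: le_trans (kap_le b) _; rewrite Cb; apply: leIl.
  exact: kpart0.
rewrite negb_exists => /forallP only_a.
suff -> : atom a `&` kap = atom a `&` star (kpart (atom a)).
  exact: kpart_residual.
apply/le_anti/andP; split.
  rewrite lexI leIl /= (le_trans (leIr _ _)) //.
  by have := kap_le a; rewrite Ca.
rewrite lexI leIl /=; apply/meetsP_seq => b _ _.
have [->|ba] := eqVneq b a; first by rewrite Ca leIr.
have /negbTE -> /= : ~~ C b by have := only_a b; rewrite ba.
apply/leIxl/le_star/eqP; rewrite -lex0 -(dj _ _ ba).
by apply: leI2 => //; apply: leIl.
Qed.

Hypothesis range1 : forall x,
  negstar (x `&` negstar x) = negstar (negstar (x `&` negstar x)).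

Lemma bifixed_core_negstar x : bifixed (core (negstar x)).
Proof.
set w := negstar x.
have nsw : negstar (core w) = core w.
  by have := range1 x; rewrite !negstarI /core -/w => ->.
have skw : skeletal (core w) by rewrite -nsw; apply: skeletal_negstar.
split => //; apply/le_anti/andP; split.
  by apply: le_star; rewrite -{1}nsw -negstarI meet_star negstar0.
by apply: negstar_star_sym; rewrite skw nsw.
Qed.

Lemma bifixed_core_star b : bifixed (core (star b)).
Proof. by rewrite -negstar_neg; apply: bifixed_core_negstar. Qed.

Section Generated.
Variable s : seq T.

(* Minterms of the [star] and [negstar] of the generators, refined twice: by
   [kappa], so that [kpart] is trivial or the identity on each atom of [beta]
   (see [kpart_atom_meet_minterm]), and by [zeta], which decides the cores
   [core (star (beta p))].  Then [negstar (star _)] of every atom, and hence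
   [negstar] of every element of the span, is again in the span. *)
Definition gen_literal (p : 'I_(size s) * bool) :=
  if p.2 then negstar (nth \bot s p.1) else star (nth \bot s p.1).
Definition alpha := minterm gen_literal.
Definition kappa := minterm (fun B => kpart (alpha B)).
Definition beta := meet_family alpha kappa.
Definition zeta := minterm (fun p => core (star (beta p))).
Definition gen_atom := meet_family beta zeta.

Local Notation gen_spanned := (spanned gen_atom).

Lemma disjoint_gen_atom : disjoint_family gen_atom.
Proof. by do 2?apply: disjoint_meet_family; apply: disjoint_minterm. Qed.

Lemma dense_gen_atom : dense_family gen_atom.
Proof. by do 2?apply: dense_meet_family; apply: dense_minterm. Qed.

Lemma skeletal_gen_literal p : skeletal (gen_literal p).
Proof.
by rewrite /gen_literal; case: p.2; [apply: skeletal_negstar | apply: skeletal_star].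
Qed.

Lemma skeletal_alpha B : skeletal (alpha B).
Proof. exact/skeletal_minterm/skeletal_gen_literal. Qed.

Lemma bifixed_zeta B : bifixed (zeta B).
Proof.
apply: minterm_ind; [exact: bifixed_top | exact: bifixed_meet | ].
by move=> [] p /=; last apply: bifixed_star; apply: bifixed_core_star.
Qed.

Lemma gen_spanned_star x : gen_spanned x -> gen_spanned (star x).
Proof. by move=> spx; apply: (spanned_star disjoint_gen_atom dense_gen_atom). Qed.

Lemma gen_spanned_bot : gen_spanned \bot.
Proof. exact: spanned_bot disjoint_gen_atom dense_gen_atom. Qed.

Lemma gen_spanned_sjoin x y :
  gen_spanned x -> gen_spanned y -> gen_spanned (sjoin x y).
Proof.
by move=> spx spy; apply/gen_spanned_star/spanned_meet; apply: gen_spanned_star.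
Qed.

Lemma gen_atom_le_alpha q : gen_atom q <= alpha q.1.1.
Proof. exact: le_trans (leIl _ _) (leIl _ _). Qed.

Lemma gen_atom_le_kappa q : gen_atom q <= kappa q.1.2.
Proof. exact: le_trans (leIl _ _) (leIr _ _). Qed.

Lemma gen_atom_le_zeta q : gen_atom q <= zeta q.2.
Proof. exact: leIr. Qed.

Lemma spanned_gen_literal p : gen_spanned (gen_literal p).
Proof.
apply: (spanned_refining dense_gen_atom (skeletal_gen_literal p)) => q.
by exists (q.1.1 p); apply: le_trans (gen_atom_le_alpha q) (minterm_le _ _ p).
Qed.

Lemma spanned_kpart_alpha B : gen_spanned (kpart (alpha B)).
Proof.
apply: (spanned_refining dense_gen_atom) => [|q].
  exact/skeletal_meet/skeletal_negstar/skeletal_alpha.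
by exists (q.1.2 B); apply: le_trans (gen_atom_le_kappa q) (minterm_le _ _ B).
Qed.

Lemma spanned_core_beta p : gen_spanned (core (star (beta p))).
Proof.
apply: (spanned_refining dense_gen_atom) => [|q].
  exact/skeletal_bifixed/bifixed_core_star.
by exists (q.2 p); apply: le_trans (gen_atom_le_zeta q) (minterm_le _ _ p).
Qed.

Lemma spanned_beta p : gen_spanned (beta p).
Proof.
apply: spanned_meet; apply: spanned_minterm disjoint_gen_atom dense_gen_atom _.
  exact: spanned_gen_literal.
exact: spanned_kpart_alpha.
Qed.

Lemma spanned_zeta B : gen_spanned (zeta B).
Proof.
exact: spanned_minterm disjoint_gen_atom dense_gen_atom spanned_core_beta.
Qed.

Lemma spanned_negstar_star_gen_atom q : gen_spanned (negstar (star (gen_atom q))).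
Proof.
case: q => p B; rewrite /gen_atom /meet_family /= starI.
rewrite (negstar_sjoin (skeletal_star _) (bifixed_star (bifixed_zeta B))).
apply: gen_spanned_sjoin; last by apply/gen_spanned_star/spanned_zeta.
rewrite negstar_star_split; apply: gen_spanned_sjoin; first exact: spanned_core_beta.
have [->|->] := kpart_atom_meet_minterm p.1 p.2 (@disjoint_minterm _ gen_literal).
  exact: spanned_beta.
exact: gen_spanned_bot.
Qed.

Lemma spanned_negstar x : gen_spanned x -> gen_spanned (negstar x).
Proof.
case=> B ->; rewrite /span (big_morph negstar negstarI negstar1).
by apply: spanned_bigmeet => a; apply: spanned_negstar_star_gen_atom.
Qed.

Lemma generated_spanned x :
  generated star neg s x -> gen_spanned (star x) /\ gen_spanned (negstar x).
Proof.
elim=> {x} [x xs | | | x y _ [sx nsx] _ [sy nsy] | x y _ [sx nsx] _ [sy nsy]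
  | x _ [sx nsx] | x _ [sx nsx]].
- have i_lt : (index x s < size s)%N by rewrite index_mem.
  have := spanned_gen_literal (Ordinal i_lt, false).
  have := spanned_gen_literal (Ordinal i_lt, true).
  by rewrite /gen_literal /= nth_index.
- by rewrite star0 negstar0; split; [exact: spanned_top | exact: gen_spanned_bot].
- by rewrite star1 negstar1; split; [exact: gen_spanned_bot | exact: spanned_top].
- by rewrite starI negstarI; split; [apply: gen_spanned_sjoin | apply: spanned_meet].
- by rewrite starU negstarU; split; [apply: spanned_meet | apply: gen_spanned_sjoin].
- by split; [apply: gen_spanned_star | apply: spanned_negstar].
- by rewrite negstar_neg; split.
Qed.

End Generated.

End PcdmAlgebra.

End Pseudocomplement.

Theorem theorem4p10 :
  forall d (T : tbDistrLatticeType d) (star prime : T -> T),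
    in_M1 star prime ->
    forall s : seq T, exists l : seq T,
      forall x, generated star prime s x -> x \in l.
Proof.
move=> d T star neg [[starP [negK negU]] [regular range1]] s.
pose L := spans star (gen_atom star neg (s:=s)).
apply: (@finite_of_inj_into_seq _ _ _ (fun x => (star x, negstar star neg x))
  [seq (a, b) | a <- L, b <- L]).
  by move=> x y _ _ [sxy nsxy]; apply: star_negstar_inj sxy nsxy.
move=> x gen_x; have [sx nsx] := generated_spanned starP negK negU range1 gen_x.
by apply/allpairsP; exists (star x, negstar star neg x); rewrite !spanned_in_spans.
Qed.
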